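(* (Kleene proof principle) Let $\mathscr{S}$ be an expressivity situation and $x\colon X\to BX$ a $B$-coalgebra. Assume the chain $\top\sqsupseteq(x^*\circ\overline{B}^{\underline{\Omega},\tau})(\top)\sqsupseteq(x^*\circ\overline{B}^{\underline{\Omega},\tau})^2(\top)\sqsupseteq\cdots$ in $\mathcal{E}_X$ stabilizes after $\omega$ steps, i.e. $\bigwedge_{i<\omega}(x^*\circ\overline{B}^{\underline{\Omega},\tau})^i(\top)$ is a fixed point of $x^*\circ\overline{B}^{\underline{\Omega},\tau}$. If for each $i\in\mathbb{N}$ the set $\{[\![\varphi]\!]_x\mid\varphi\in L_{\mathscr{S}},\ \mathrm{depth}(\varphi)\le i\}\subseteq\mathcal{C}(X,\Omega)$ is an approximating family, then $\mathscr{S}$ is expressive for $x$, i.e. $\nu\bigl(x^*\circ\overline{B}^{\underline{\Omega},\tau}\bigr)\sqsupseteq\bigwedge_{\varphi\in L_{\mathscr{S}}}[\![\varphi]\!]_x^{*}\underline{\Omega}$.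
   Context: An expressivity situation $\mathscr{S}=(p,B,\Omega,\underline{\Omega},\Sigma,\Lambda,(f_\sigma),(\tau_\lambda))$ consists of: a fibration $p\colon\mathcal{E}\to\mathcal{C}$ whose fibers $\mathcal{E}_X$ are complete lattices (order $\sqsubseteq$, meets $\bigwedge$, top $\top$) with meet-preserving reindexing $f^*$; a functor $B\colon\mathcal{C}\to\mathcal{C}$; $\Omega\in\mathcal{C}$ with finite powers and $\underline{\Omega}\in\mathcal{E}$ above $\Omega$; a ranked alphabet $\Sigma$ with arrows $f_\sigma\colon\Omega^{\mathrm{rank}(\sigma)}\to\Omega$ each lifting to some $g_\sigma\colon\underline{\Omega}^{\mathrm{rank}(\sigma)}\to\underline{\Omega}$ with $pg_\sigma=f_\sigma$; a set $\Lambda$ and arrows $\tau_\lambda\colon B\Omega\to\Omega$. Formulas of $L_{\mathscr{S}}$: $\varphi::=\sigma(\varphi_1,\dots,\varphi_{\mathrm{rank}(\sigma)})\mid\heartsuit_\lambda\varphi$, with semantics $[\![\sigma(\varphi_1,\dots)]\!]_x=f_\sigma\circ\langle[\![\varphi_1]\!]_x,\dots\rangle$, $[\![\heartsuit_\lambda\varphi]\!]_x=\tau_\lambda\circ B[\![\varphi]\!]_x\circ x$; depth is defined by $\mathrm{depth}(\sigma(\varphi_1,\dots))=\max_j\mathrm{depth}(\varphi_j)$ (0 for constants) and $\mathrm{depth}(\heartsuit_\lambda\varphi)=\mathrm{depth}(\varphi)+1$. Codensity lifting: $\overline{B}^{\underline{\Omega},\tau}P=\bigwedge_{\lambda\in\Lambda,\,h\in\mathcal{E}(P,\underline{\Omega})}(\tau_\lambda\circ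 B(ph))^*\underline{\Omega}$; codensity bisimilarity is its greatest fixed point $\nu(x^*\circ\overline{B}^{\underline{\Omega},\tau})$ in $\mathcal{E}_X$. A subset $S\subseteq\mathcal{C}(X,\Omega)$ is an approximating family if for every $\mathcal{E}$-arrow $h\colon\bigwedge_{k\in S}k^*\underline{\Omega}\to\underline{\Omega}$ and every $\lambda\in\Lambda$, $\bigwedge_{k'\in S,\lambda'\in\Lambda}(\tau_{\lambda'}\circ Bk')^*\underline{\Omega}\sqsubseteq(\tau_\lambda\circ B(ph))^*\underline{\Omega}$. *)

From mathcomp Require Import all_boot.
Set Implicit Arguments. Unset Strict Implicit. Unset Printing Implicit Defensive.

Record Category := {
  ob :> Type;
  hom : ob -> ob -> Type;
  cmp : forall A B C, hom B C -> hom A B -> hom A C;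
  idm : forall A, hom A A;
  cmp_idl : forall A B (f : hom A B), cmp (idm B) f = f;
  cmp_idr : forall A B (f : hom A B), cmp f (idm A) = f;
  cmp_assoc : forall A B C D (h : hom C D) (g : hom B C) (f : hom A B),
      cmp h (cmp g f) = cmp (cmp h g) f
}.
Arguments hom {c}.
Arguments cmp {c A B C}.
Arguments idm {c}.

Record Functor (C : Category) := {
  fob :> C -> C;
  fmap : forall A B, hom A B -> hom (fob A) (fob B);
  fmap_id : forall A, fmap (idm A) = idm (fob A);
  fmap_cmp : forall A B D (g : hom B D) (f : hom A B),
      fmap (cmp g f) = cmp (fmap g) (fmap f)
}.
Arguments fmap {C} f0 {A B}.

Record Powers (C : Category) (O : C) := {
  pw : nat -> C;
  prj : forall n, 'I_n -> hom (pw n) O;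
  tpl : forall n (A : C), ('I_n -> hom A O) -> hom A (pw n);
  prj_tpl : forall n A (fs : 'I_n -> hom A O) i, cmp (prj i) (tpl fs) = fs i;
  tpl_uniq : forall n A (g : hom A (pw n)), tpl (fun i => cmp (prj i) g) = g
}.
Arguments prj {C O} p {n}.
Arguments tpl {C O} p {n A}.

(* ---------- Fibrations with complete-lattice fibres ----------
   Since fibres are posets, an E-arrow P -> Q above f : X -> Y exists
   (uniquely) iff P ⊑ f^* Q; we therefore present the fibration p by its
   fibres E_X, the reindexing maps f^*, and use this characterization of
   E-arrows. *)
Record CLatFib (C : Category) := {
  fib : C -> Type;
  fle : forall X, fib X -> fib X -> Prop;
  fmeet : forall X, (fib X -> Prop) -> fib X;
  fle_refl : forall X (P : fib X), fle P P;
  fle_trans : forall X (P Q R : fib X), fle P Q -> fle Q R -> fle P R;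
  fle_anti : forall X (P Q : fib X), fle P Q -> fle Q P -> P = Q;
  fmeet_lb : forall X (S : fib X -> Prop) P, S P -> fle (fmeet S) P;
  fmeet_glb : forall X (S : fib X -> Prop) Q,
      (forall P, S P -> fle Q P) -> fle Q (fmeet S);
  rx : forall X Y, hom X Y -> fib Y -> fib X;
  rx_id : forall X (P : fib X), rx (idm X) P = P;
  rx_cmp : forall X Y Z (f : hom X Y) (g : hom Y Z) P,
      rx (cmp g f) P = rx f (rx g P);
  rx_meet : forall X Y (f : hom X Y) (S : fib Y -> Prop),
      rx f (fmeet S) = fmeet (fun Q => exists2 P, S P & Q = rx f P)
}.
Arguments fib {C} c.
Arguments fle {C c X}.
Arguments fmeet {C c X}.
Arguments rx {C c X Y}.

Definition ftop C (E : CLatFib C) (X : C) : fib E X := fmeet (fun _ => False).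
Definition fjoin C (E : CLatFib C) (X : C) (S : fib E X -> Prop) : fib E X :=
  fmeet (fun Q => forall P, S P -> fle P Q).

Record Situation := {
  sC : Category;
  sE : CLatFib sC;
  sB : Functor sC;
  sOm : sC;
  sPow : Powers sOm;
  sOmb : fib sE sOm;
  sSig : Type;
  srank : sSig -> nat;
  sf : forall s : sSig, hom (pw sPow (srank s)) sOm;
  (* f_sigma lifts to an E-arrow underline(Omega)^rank -> underline(Omega),
     where underline(Omega)^n (the power in E above Omega^n) is the meet of
     the reindexings of underline(Omega) along the projections. *)
  sf_lift : forall s : sSig,
      fle (fmeet (fun Q => exists i : 'I_(srank s), Q = rx (prj sPow i) sOmb))
          (rx (sf s) sOmb);
  sLam : Type;
  stau : sLam -> hom (sB sOm) sOm
}.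

Section Logic.
Variable S : Situation.
Local Notation C := (sC S).
Local Notation E := (sE S).
Local Notation B := (sB S).
Local Notation Om := (sOm S).

Inductive formula :=
| FOp (s : sSig S) (args : 'I_(srank s) -> formula)
| FMod (l : sLam S) (phi : formula).

Fixpoint sem (X : C) (x : hom X (B X)) (phi : formula) : hom X Om :=
  match phi with
  | FOp s args => cmp (sf s) (tpl (sPow S) (fun i => sem x (args i)))
  | FMod l psi => cmp (stau l) (cmp (fmap B (sem x psi)) x)
  end.

Fixpoint depth (phi : formula) : nat :=
  match phi with
  | FOp s args => \max_(i < srank s) depth (args i)
  | FMod _ psi => (depth psi).+1
  end.

(* Codensity lifting: E-arrows h : P -> underline Omega are exactly the
   arrows ph : Y -> Omega with P ⊑ (ph)^* underline Omega. *)
Definition codlift (Y : C) (P : fib E Y) : fib E (B Y) :=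
  fmeet (fun Q => exists l : sLam S, exists2 h : hom Y Om,
           fle P (rx h (sOmb S)) & Q = rx (cmp (stau l) (fmap B h)) (sOmb S)).

Definition stepmap (X : C) (x : hom X (B X)) (P : fib E X) : fib E X :=
  rx x (codlift P).

Definition gfp (X : C) (F : fib E X -> fib E X) : fib E X :=
  fjoin (fun P => fle P (F P)).

Definition approximating (X : C) (Sf : hom X Om -> Prop) : Prop :=
  forall h : hom X Om,
    fle (fmeet (fun Q => exists2 k, Sf k & Q = rx k (sOmb S))) (rx h (sOmb S)) ->
    forall l : sLam S,
      fle (fmeet (fun Q => exists l' : sLam S, exists2 k', Sf k' &
                    Q = rx (cmp (stau l') (fmap B k')) (sOmb S)))
          (rx (cmp (stau l) (fmap B h)) (sOmb S)).

Definition depth_le_sems (X : C) (x : hom X (B X)) (i : nat) : hom X Om -> Prop :=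
  fun k => exists2 phi : formula, (depth phi <= i)%N & k = sem x phi.

Definition logical_meet (X : C) (x : hom X (B X)) : fib E X :=
  fmeet (fun Q => exists phi : formula, Q = rx (sem x phi) (sOmb S)).

End Logic.
Arguments FOp {S}.
Arguments FMod {S}.

(* Write [L_i] for the meet of the [[phi]]^* Omega over formulas of depth at
   most [i].  Since depth-[i+1] formulas include the modal formulas [FMod l phi] with
   [depth phi <= i], the approximating-family hypothesis gives
   [L_(i+1) <= x^* (codensity lifting of L_i)], so by induction and
   monotonicity [L_i] lies below the [i]-th Kleene iterate from top.  Hence the
   logical meet lies below the omega-limit of the chain, which by assumption is
   a fixed point and therefore lies below the greatest fixed point. *)
From mathcomp Require Import all_boot.
Set Implicit Arguments. Unset Strict Implicit.

Section Reindexing.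
Variables (C : Category) (E : CLatFib C).

Lemma rx_mono (X Y : C) (f : hom X Y) (P Q : fib E Y) :
  fle P Q -> fle (rx f P) (rx f Q).
Proof.
move=> PQ.
have -> : P = fmeet (fun R => R = P \/ R = Q).
  apply: fle_anti; last by apply: fmeet_lb; left.
  by apply: fmeet_glb => R [->|->] //; apply: fle_refl.
by rewrite rx_meet; apply: fmeet_lb; exists Q; [right|].
Qed.

End Reindexing.

Section KleeneProofPrinciple.
Variable S : Situation.
Local Notation C := (sC S).
Local Notation B := (sB S).
Local Notation Om := (sOm S).
Local Notation Omb := (sOmb S).

Definition sems_meet (X : C) (Sf : hom X Om -> Prop) : fib (sE S) X :=
  fmeet (fun Q => exists2 k, Sf k & Q = rx k Omb).

Definition modal_meet (X : C) (Sf : hom X Om -> Prop) : fib (sE S) (B X) :=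
  fmeet (fun Q => exists l : sLam S, exists2 k, Sf k &
           Q = rx (cmp (stau l) (fmap B k)) Omb).

Lemma codlift_mono (Y : C) (P Q : fib (sE S) Y) :
  fle P Q -> fle (codlift P) (codlift Q).
Proof.
move=> PQ; apply: fmeet_glb => R [l [h Qh ->]].
by apply: fmeet_lb; exists l, h => //; apply: fle_trans PQ Qh.
Qed.

Lemma stepmap_mono (X : C) (x : hom X (B X)) (P Q : fib (sE S) X) :
  fle P Q -> fle (stepmap x P) (stepmap x Q).
Proof. by move=> PQ; apply/rx_mono/codlift_mono. Qed.

Lemma post_fixed_le_gfp (X : C) (F : fib (sE S) X -> fib (sE S) X) P :
  fle P (F P) -> fle P (gfp F).
Proof. by move=> PFP; apply: fmeet_glb => Q; apply. Qed.

Lemma approximating_modal_meet (X : C) (Sf : hom X Om -> Prop) :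
  approximating Sf -> fle (modal_meet Sf) (codlift (sems_meet Sf)).
Proof. by move=> Sf_appr; apply: fmeet_glb => Q [l [h Sf_h ->]]; apply: Sf_appr. Qed.

Lemma depth_le_succ_meet (X : C) (x : hom X (B X)) (i : nat) :
  fle (sems_meet (depth_le_sems x i.+1)) (rx x (modal_meet (depth_le_sems x i))).
Proof.
rewrite rx_meet; apply: fmeet_glb => Q [P [l [k [phi dphi ->] ->] ->]].
apply: fmeet_lb; exists (sem x (FMod l phi)); first by exists (FMod l phi).
by rewrite /= !rx_cmp.
Qed.

Lemma depth_le_meet_le_iter (X : C) (x : hom X (B X)) :
  (forall i, approximating (depth_le_sems x i)) ->
  forall i, fle (sems_meet (depth_le_sems x i)) (iter i (stepmap x) (ftop (sE S) X)).
Proof.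
move=> appr; elim=> [|i IH] /=; first exact: fmeet_glb.
apply: fle_trans (depth_le_succ_meet x i) _.
apply: fle_trans (rx_mono x (approximating_modal_meet (appr i))) _.
exact: stepmap_mono.
Qed.

Lemma logical_meet_le_depth_le_meet (X : C) (x : hom X (B X)) (i : nat) :
  fle (logical_meet x) (sems_meet (depth_le_sems x i)).
Proof. by apply: fmeet_glb => _ [k [phi _ ->] ->]; apply: fmeet_lb; exists phi. Qed.

End KleeneProofPrinciple.

Theorem mainTheorem3 (S : Situation) (X : sC S) (x : hom X (sB S X)) :
  stepmap x (fmeet (fun Q => exists i : nat, Q = iter i (stepmap x) (ftop (sE S) X)))
    = fmeet (fun Q => exists i : nat, Q = iter i (stepmap x) (ftop (sE S) X)) ->
  (forall i : nat, approximating (depth_le_sems x i)) ->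
  fle (logical_meet x) (gfp (stepmap x)).
Proof.
set omega_limit := fmeet _ => limit_fixed appr.
have logical_le_limit : fle (logical_meet x) omega_limit.
  apply: fmeet_glb => _ [i ->].
  exact: fle_trans (logical_meet_le_depth_le_meet x i) (depth_le_meet_le_iter appr i).
apply: fle_trans logical_le_limit _.
by apply: post_fixed_le_gfp; rewrite limit_fixed; apply: fle_refl.
Qed.
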